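(* Consider a rule of the PJR-Exact family run on $(\mathcal{A},k)$, and fix $j$ with $1\le j\le k-1$ such that iterations $1,\dots,j$ are all normal. Then no candidate in $C\setminus W_j$ is in a starving state after $j$ iterations; i.e., for every $c\in C\setminus W_j$ and every $i\in N_c$ with $\ell_j(i,c)>|A_i\cap W_j|$, we have $f_i^j\ge\frac{\ell_j(i,c)-|A_i\cap W_j|}{\ell_j(i,c)}$.
   Context: Setting: voters $N=\{1,\dots,n\}$, candidates $C=\{c_1,\dots,c_m\}$, approval ballots $A_i\subseteq C$, $\mathcal{A}=(A_1,\dots,A_n)$, $k$ a positive integer with $k\le|C|$, $q=n/k$, $N_c=\{i: c\in A_i\}$. Convention: $\max\emptyset=0$. Dissatisfaction level: for $W\subseteq C$ with $|W|\le k$ and $c\in C\setminus W$, $\ell(c,W)$ is the largest nonnegative integer $\ell$ with $\ell=\lfloor \frac{k}{n}|\{i\in N: c\in A_i,\ |A_i\cap W|<\ell\}|\rfloor$. PJR-Exact family: iterative procedures selecting $w_1,\dots,w_k$, $W_0=\emptyset$, $W_j=W_{j-1}\cup\{w_j\}$, $w_j\notin W_{j-1}$, with vote fractions $f_i^0=1$, $0\le f_i^j\le f_i^{j-1}$, such that at each iteration $j$: (a) $f_i^j=f_i^{j-1}$ for $i\notin N_{w_j}$; (b) with $s=\sum_{i\in N_{w_j}}f_i^{j-1}$, if $s>q$ then $\sum_{i\in N_{w_j}}(f_i^{j-1}-f_i^j)=q$, and if $s\le q$ then $f_i^j=0$ for all $i\in N_{w_j}$; (c) if some $c\in C\setminus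 W_{j-1}$ has $\sum_{i\in N_c}f_i^{j-1}\ge q$ then $\sum_{i\in N_{w_j}}f_i^{j-1}\ge q$. Notation along a run: $\ell_j(c)=\ell(c,W_j)$ for $c\in C\setminus W_j$; for $c\in C\setminus W_j$ and $i\in N_c$, $\ell_j(i,c)=\max_{c'\in A_i\setminus(W_j\cup\{c\})}\ell_j(c')$; $g_i^j(c)=0$ if $\ell_j(i,c)\le|A_i\cap W_j|$ and $g_i^j(c)=\frac{\ell_j(i,c)-|A_i\cap W_j|-1}{\ell_j(i,c)}$ otherwise. Normal state: $c\in C\setminus W_j$ is in normal state after $j$ iterations if (1) for each $i\in N_c$ with $\ell_j(i,c)>|A_i\cap W_j|$ we have $f_i^j\ge\frac{\ell_j(i,c)-|A_i\cap W_j|}{\ell_j(i,c)}$, and (2) $\sum_{i\in N_c}(f_i^j-g_i^j(c))\ge q$. A candidate $c\in C\setminus W_j$ is in a starving state after $j$ iterations if condition (1) fails. Normal iteration: iteration $j$ ($1\le j\le k$) is normal if $w_j$ is in normal state after $j-1$ iterations and, for each $i\in N_{w_j}$ with $\ell_{j-1}(i,w_j)>|A_i\cap W_{j-1}|$, $f_i^j\ge\frac{\ell_{j-1}(i,w_j)-|A_i\cap W_j|}{\ell_{j-1}(i,w_j)}$. *)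

From HB Require Import structures.
From mathcomp Require Import all_boot all_order all_algebra.
Set Implicit Arguments. Unset Strict Implicit. Unset Printing Implicit Defensive.
Import Order.TTheory GRing.Theory Num.Theory.

Section PJR.
Variables (n k : nat) (C : finType) (A : 'I_n -> {set C}).

Definition quota : rat := (n%:R / k%:R)%R.

Definition Nc (c : C) : {set 'I_n} := [set i | c \in A i].

Definition Wset (w : nat -> C) (j : nat) : {set C} := [set w (val t).+1 | t : 'I_j].

Definition cnt_below (c : C) (W : {set C}) (l : nat) : nat :=
  #|[set i in Nc c | #|A i :&: W| < l]|.

(* l(c, W): the largest nonnegative integer l with l = floor(k/n * cnt_below c W l).
   floor((k/n) * x) is written (k * x) %/ n.  Every such l is <= k (as cnt <= n),
   and l = 0 always qualifies, so the max over l < k+1 is the largest one. *)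
Definition dissat (c : C) (W : {set C}) : nat :=
  \max_(l < k.+1 | nat_of_ord l == (k * cnt_below c W l) %/ n) nat_of_ord l.

(* l_j(i, c) = max_{c' in A_i \ (W u {c})} l(c', W), with max of empty = 0 *)
Definition ell_voter (W : {set C}) (i : 'I_n) (c : C) : nat :=
  \max_(c' in A i :\: (W :|: [set c])) dissat c' W.

Definition gfun (W : {set C}) (i : 'I_n) (c : C) : rat :=
  if ell_voter W i c <= #|A i :&: W| then 0%R
  else (((ell_voter W i c)%:R - (#|A i :&: W|)%:R - 1) / (ell_voter W i c)%:R)%R.

(* The run (w, f) is a run of a PJR-Exact rule on (A, k):
   w j = w_j for 1 <= j <= k, f j i = f_i^j. *)
Definition pjr_exact_run (w : nat -> C) (f : nat -> 'I_n -> rat) : Prop :=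
  (forall i, f 0 i = 1%R) /\
  forall j, 1 <= j <= k ->
    [/\ w j \notin Wset w j.-1,
        (forall i, (0 <= f j i)%R /\ (f j i <= f j.-1 i)%R),
        (forall i, i \notin Nc (w j) -> f j i = f j.-1 i),
        (let s := (\sum_(i in Nc (w j)) f j.-1 i)%R in
           if (quota < s)%R
           then (\sum_(i in Nc (w j)) (f j.-1 i - f j i))%R = quota
           else forall i, i \in Nc (w j) -> f j i = 0%R) &
        ((exists c, c \notin Wset w j.-1 /\ (quota <= \sum_(i in Nc c) f j.-1 i)%R) ->
           (quota <= \sum_(i in Nc (w j)) f j.-1 i)%R)].

(* Condition (1) of the normal state (its failure = starving state). *)
Definition not_starving (w : nat -> C) (f : nat -> 'I_n -> rat) (j : nat) (c : C) : Prop :=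
  forall i, i \in Nc c ->
    #|A i :&: Wset w j| < ell_voter (Wset w j) i c ->
    (((ell_voter (Wset w j) i c)%:R - (#|A i :&: Wset w j|)%:R)
       / (ell_voter (Wset w j) i c)%:R <= f j i)%R.

Definition starving (w : nat -> C) (f : nat -> 'I_n -> rat) (j : nat) (c : C) : Prop :=
  ~ not_starving w f j c.

Definition normal_state (w : nat -> C) (f : nat -> 'I_n -> rat) (j : nat) (c : C) : Prop :=
  not_starving w f j c /\
  (quota <= \sum_(i in Nc c) (f j i - gfun (Wset w j) i c))%R.

Definition normal_iteration (w : nat -> C) (f : nat -> 'I_n -> rat) (j : nat) : Prop :=
  normal_state w f j.-1 (w j) /\
  forall i, i \in Nc (w j) ->
    #|A i :&: Wset w j.-1| < ell_voter (Wset w j.-1) i (w j) ->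
    (((ell_voter (Wset w j.-1) i (w j))%:R - (#|A i :&: Wset w j|)%:R)
       / (ell_voter (Wset w j.-1) i (w j))%:R <= f j i)%R.

End PJR.

From HB Require Import structures.
From mathcomp Require Import all_boot all_order all_algebra.
From mathcomp Require Import zify.
Set Implicit Arguments. Unset Strict Implicit. Unset Printing Implicit Defensive.
Import Order.TTheory GRing.Theory Num.Theory.

(* Fix a voter i and let t <= j be the last iteration whose winner voter i
   approves (t = 0 if there is none, and then f_i^j = 1).  After t neither
   f_i nor A_i :&: W changes, so f_i^j = f_i^t and a := |A_i :&: W_j| equals
   |A_i :&: W_t|.  Iteration t is normal, which bounds f_i^t below by
   (l' - a) / l' with l' = l_(t-1)(i, w_t).  Dissatisfaction levels can only
   drop as W grows, so l' >= l := l_j(i, c), and (l - a) / l is increasing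
   in l. *)

Section Dissatisfaction.
Variables (n k : nat) (C : finType) (A : 'I_n -> {set C}).
Hypothesis n_gt0 : 0 < n.

Lemma cnt_below_monol c (W : {set C}) l1 l2 :
  l1 <= l2 -> cnt_below A c W l1 <= cnt_below A c W l2.
Proof.
move=> le_l; apply/subset_leq_card/subsetP => i; rewrite !inE.
by case/andP=> -> /leq_trans->.
Qed.

Lemma cnt_below_antiW c (W W' : {set C}) l :
  W \subset W' -> cnt_below A c W' l <= cnt_below A c W l.
Proof.
move=> sWW'; apply/subset_leq_card/subsetP => i; rewrite !inE.
case/andP=> -> /=; apply: leq_ltn_trans.
exact/subset_leq_card/setIS.
Qed.

Lemma floor_cnt_below_le c (W : {set C}) l : (k * cnt_below A c W l) %/ n <= k.
Proof.
rewrite -[k in _ <= k](mulnK k n_gt0) leq_div2r // leq_mul2l.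
by rewrite -[n in _ <= n]card_ord max_card orbT.
Qed.

(* g l := floor(k/n * cnt_below c W l) is monotone and maps [0, k] into
   itself, so iterating g from a post-fixpoint l <= g l reaches a fixpoint
   above l, which dissat bounds. *)
Lemma dissat_ge c (W : {set C}) l :
  l <= k -> l <= (k * cnt_below A c W l) %/ n -> l <= dissat k A c W.
Proof.
move: {2}(k - l).+1 (ltnSn (k - l)) => d; elim: d l => // d IH l lt_d le_lk.
set g := fun l => (k * cnt_below A c W l) %/ n => le_lg.
have [lt_lg | le_gl] := ltnP l (g l).
  apply: leq_trans (ltnW lt_lg) (IH _ _ (floor_cnt_below_le _ _ _) _).
    by have := floor_cnt_below_le c W l; rewrite -/(g l); lia.
  exact/leq_div2r/leq_mul/cnt_below_monol/ltnW.
have fix_l : l == g l by rewrite eqn_leq le_lg le_gl.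
exact: (@leq_bigmax_cond _ _ (fun l : 'I_k.+1 => nat_of_ord l)
  (Ordinal (le_lk : l < k.+1))).
Qed.

Lemma dissat_le_floor c (W : {set C}) :
  dissat k A c W <= (k * cnt_below A c W (dissat k A c W)) %/ n.
Proof.
rewrite /dissat; elim/big_ind: _ => // [x y le_x le_y | l /eqP <- //].
by rewrite /maxn; case: ifP.
Qed.

Lemma dissat_le c (W : {set C}) : dissat k A c W <= k.
Proof. by apply: leq_trans (dissat_le_floor c W) _; apply: floor_cnt_below_le. Qed.

Lemma dissat_antiW c (W W' : {set C}) :
  W \subset W' -> dissat k A c W' <= dissat k A c W.
Proof.
move=> sWW'; apply: dissat_ge; first exact: dissat_le.
apply: leq_trans (dissat_le_floor c W') _.
exact/leq_div2r/leq_mul/cnt_below_antiW.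
Qed.

Lemma ell_voter_antiW (W W' : {set C}) i c d :
  W \subset W' -> d \in W' :|: [set c] ->
  ell_voter k A W' i c <= ell_voter k A W i d.
Proof.
move=> sWW' dW'; apply/bigmax_leqP => c'; rewrite !inE negb_or.
case/andP=> /andP[c'W' c'c] c'A.
apply: leq_trans (dissat_antiW c' sWW') _; apply: leq_bigmax_cond.
rewrite !inE c'A andbT negb_or; apply/andP; split.
  by apply: contra c'W'; apply: (subsetP sWW').
by apply: contraTneq dW' => <-; rewrite !inE negb_or c'W'.
Qed.

End Dissatisfaction.

Section Winners.
Variables (C : finType) (w : nat -> C).

Lemma WsetP j x : reflect (exists2 s, 0 < s <= j & x = w s) (x \in Wset w j).
Proof.
apply: (iffP imsetP) => [[t _ ->] | [s /andP[s_gt0 le_sj] ->]].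
  by exists t.+1; rewrite //= ltn_ord.
have lt_s1j : s.-1 < j by lia.
by exists (Ordinal lt_s1j); rewrite //= prednK.
Qed.

Lemma Wset_subset s t : s <= t -> Wset w s \subset Wset w t.
Proof.
move=> le_st; apply/subsetP => x /WsetP[u u_s ->].
by apply/WsetP; exists u => //; lia.
Qed.

Lemma Wset_last_hit (S : {set C}) s t :
  s <= t -> (forall u, s < u <= t -> w u \notin S) ->
  S :&: Wset w t = S :&: Wset w s.
Proof.
move=> le_st miss; apply/setP => x; rewrite !inE.
case xS: (x \in S) => //=; apply/idP/idP; last exact/subsetP/Wset_subset.
case/WsetP=> u u_t eq_x; apply/WsetP; exists u => //.
by case: (leqP u s) => [|lt_su]; [lia | move: (miss u); rewrite -eq_x xS; lia].
Qed.

End Winners.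

Lemma last_hit (P : pred nat) j :
  exists2 t, t <= j & (t = 0 \/ 0 < t /\ P t) /\ forall s, t < s <= j -> ~~ P s.
Proof.
elim: j => [|j [t le_tj [hit miss]]]; first by exists 0 => //; split=> [|s]; [left | lia].
have [Pj | nPj] := boolP (P j.+1).
  by exists j.+1 => //; split=> [|s]; [right | lia].
exists t; first exact: leqW.
split=> // s /andP[lt_ts]; rewrite leq_eqVlt => /orP[/eqP-> // | lt_sj].
by apply: miss; rewrite lt_ts.
Qed.

Lemma pjr_exact_run_steady n k (C : finType) (A : 'I_n -> {set C})
    (w : nat -> C) (f : nat -> 'I_n -> rat) i t m :
  pjr_exact_run k A w f -> t <= m <= k ->
  (forall s, t < s <= m -> i \notin Nc A (w s)) -> f m i = f t i.
Proof.
move=> [_ run]; elim: m => [|m IH] le_tmk miss; first by case: t le_tmk {miss}.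
have [-> // | ne_tm] := eqVneq t m.+1.
have [_ _ steady _ _] := run m.+1 (ltac:(lia)).
rewrite steady /=; last by apply: miss; lia.
by apply: IH => [|s le_s]; [lia | apply: miss; lia].
Qed.

Lemma share_le1 (l a : nat) : 0 < l -> ((l%:R - a%:R) / l%:R <= 1 :> rat)%R.
Proof. by move=> l_gt0; rewrite ler_pdivrMr ?ltr0n // mul1r gerBl ler0n. Qed.

Lemma share_monol (l l' a : nat) : 0 < l -> l <= l' ->
  ((l%:R - a%:R) / l%:R <= (l'%:R - a%:R) / l'%:R :> rat)%R.
Proof.
move=> l_gt0 le_ll'; have l'_gt0 : 0 < l' by exact: leq_trans le_ll'.
rewrite !mulrBl !divff ?pnatr_eq0 -?lt0n // lerD2l lerN2.
by apply: ler_wpM2l; rewrite ?ler0n // lef_pV2 ?posrE ?ltr0n // ler_nat.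
Qed.

Theorem mainTheorem4 (n k : nat) (C : finType) (A : 'I_n -> {set C})
    (w : nat -> C) (f : nat -> 'I_n -> rat) (j : nat) :
  0 < n -> 0 < k -> k <= #|C| ->
  @pjr_exact_run n k C A w f ->
  1 <= j <= k.-1 ->
  (forall t, 1 <= t <= j -> @normal_iteration n k C A w f t) ->
  forall c, c \notin @Wset C w j -> @not_starving n k C A w f j c.
Proof.
move=> n_gt0 _ _ run le1jk normal c _ i _ lt_al.
have [t le_tj [t0_or_hit miss]] := last_hit (fun s => i \in Nc A (w s)) j.
rewrite (pjr_exact_run_steady run _ miss); last by lia.
have [-> | [t_gt0 hit]] := t0_or_hit.
  by case: run => -> _; apply: share_le1; lia.
have [_ share_wt] := normal t (ltac:(lia)).
have le_ll' : ell_voter k A (Wset w j) i c <= ell_voter k A (Wset w t.-1) i (w t).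
  apply: (ell_voter_antiW _ _ n_gt0); first by apply: Wset_subset; lia.
  by rewrite inE; apply/orP; left; apply/WsetP; exists t => //; lia.
have eqW : A i :&: Wset w j = A i :&: Wset w t.
  by apply: Wset_last_hit => // s /miss; rewrite inE.
rewrite eqW in lt_al le_ll' |- *.
apply: le_trans (share_monol _ _ le_ll') (share_wt i hit _); first lia.
apply: leq_ltn_trans (leq_trans lt_al le_ll').
exact/subset_leq_card/setIS/Wset_subset/leq_pred.
Qed.
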